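(* Let $\alpha\in[0,1)$ be irrational and $f(x)=\{x\}-\tfrac12$. There exist absolute constants $A_0,C>0$ such that for every $K$ with $a_K\ge A_0$ and every integer $0\le b\le a_K$, $$\Big|S_{bq_{K-1}}(f,\alpha)-(-1)^K\frac b2\Big(1-\frac b{a_K}\Big)\Big|\le C.$$
   Context: $\alpha=[0;a_1,a_2,\dots]$ is the continued fraction expansion with convergent denominators $q_0=1,q_1=a_1,q_{k+1}=a_{k+1}q_k+q_{k-1}$. $\{x\}$ is the fractional part. $S_N(f,\alpha):=\sum_{n=1}^N f(n\alpha)-N\int_0^1f(x)\,dx$. *)

From Stdlib Require Import Reals Lra Lia ZArith.
From Coquelicot Require Import Coquelicot.
Open Scope R_scope.

(* fractional part {x} = x - floor x (Stdlib's frac_part, Int_part = floor) *)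
Definition fracR (x : R) : R := frac_part x.

Definition saw (x : R) : R := fracR x - / 2.

Fixpoint cf_rem (alpha : R) (k : nat) : R :=
  match k with
  | O => alpha
  | S k' => fracR (/ cf_rem alpha k')
  end.

(* Partial quotients: alpha = [0; a_1, a_2, ...], a_{k+1} = floor (1/x_k);
   a_0 = 0 (alpha in [0,1)). *)
Definition cf_a (alpha : R) (k : nat) : nat :=
  match k with
  | O => O
  | S k' => Z.to_nat (Int_part (/ cf_rem alpha k'))
  end.

(* cf_qpair alpha k = (q_{k-1}, q_k), with q_{-1} = 0, q_0 = 1,
   q_{k+1} = a_{k+1} q_k + q_{k-1} (so q_1 = a_1). *)
Fixpoint cf_qpair (alpha : R) (k : nat) : nat * nat :=
  match k with
  | O => (O, 1%nat)
  | S k' => let (p, q) := cf_qpair alpha k' in (q, (cf_a alpha k * q + p)%nat)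
  end.

Definition cf_q (alpha : R) (k : nat) : nat := snd (cf_qpair alpha k).

Fixpoint birk_sum (f : R -> R) (alpha : R) (N : nat) : R :=
  match N with
  | O => 0
  | S N' => birk_sum f alpha N' + f (INR N * alpha)
  end.

Definition S_N (N : nat) (f : R -> R) (alpha : R) : R :=
  birk_sum f alpha N - INR N * RInt f 0 1.

Definition irrational (x : R) : Prop :=
  ~ exists (p q : Z), q <> 0%Z /\ x = IZR p / IZR q.

From Stdlib Require Import Reals Lra Lia ZArith.
From Coquelicot Require Import Coquelicot.
Open Scope R_scope.

(* Let p/q = p_k/q_k be the k-th convergent (K = k + 1) and delta = q alpha - p.  The
   continued fraction recursions give delta * (q / x_k + q_{k-1}) = (-1)^k, so delta has
   sign (-1)^k and b q |delta| < 1 whenever b <= a_{k+1}.  For 1 <= n <= b q the point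
   n alpha is then n p / q shifted by the drift n delta / q, which is too small to cross an
   integer except at the multiples of q (p and q are coprime), where {n alpha} jumps by the
   sign of delta.  The values {n p / q} over a period are symmetric about 1/2 (n <-> q - n),
   so S_{bq} = delta b (b q + 1) / 2 - (-1)^k b / 2 exactly, and this differs from
   (-1)^K (b/2) (1 - b/a_K) by at most 1. *)

Lemma frac_part_IZR_plus (z : Z) (y : R) : 0 <= y < 1 -> frac_part (IZR z + y) = y.
Proof. intros Hy. symmetry. exact (proj2 (Int_part_frac_part_spec _ z y Hy eq_refl)). Qed.

Lemma frac_part_plus_IZR (x : R) (z : Z) : frac_part (x + IZR z) = frac_part x.
Proof.
  rewrite (Rplus_Int_part_frac_part x) at 1.
  replace (IZR (Int_part x) + frac_part x + IZR z) with (IZR (Int_part x + z) + frac_part x)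
    by (rewrite plus_IZR; ring).
  apply frac_part_IZR_plus. pose proof (base_fp x). lra.
Qed.

Lemma frac_part_IZR_plus_small (z : Z) (eps sgn : R) :
  sgn = 1 \/ sgn = -1 -> 0 < sgn * eps -> Rabs eps < 1 ->
  frac_part (IZR z + eps) = eps + (1 - sgn) / 2.
Proof.
  intros [-> | ->] Hpos Heps; apply Rabs_def2 in Heps.
  - rewrite frac_part_IZR_plus; lra.
  - replace (IZR z + eps) with (IZR (z - 1) + (eps + 1)) by (rewrite minus_IZR; ring).
    rewrite frac_part_IZR_plus; lra.
Qed.

(* The midpoint value at integers makes [frac_mid (- x) = 1 - frac_mid x] hold everywhere. *)
Definition frac_mid (x : R) : R :=
  if Req_dec_T (frac_part x) 0 then / 2 else frac_part x.

Lemma frac_mid_plus_IZR (x : R) (z : Z) : frac_mid (x + IZR z) = frac_mid x.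
Proof. unfold frac_mid. now rewrite frac_part_plus_IZR. Qed.

Lemma frac_mid_opp (x : R) : frac_mid (- x) = 1 - frac_mid x.
Proof.
  unfold frac_mid.
  pose proof (base_fp x) as Hx.
  destruct (Req_dec_T (frac_part x) 0) as [H0 | H0].
  - destruct (fp_nat x H0) as [c ->].
    rewrite <- opp_IZR, <- (Rplus_0_l (IZR (- c))), frac_part_plus_IZR, fp_R0.
    destruct (Req_dec_T 0 0); [lra | easy].
  - assert (Hopp : frac_part (- x) = 1 - frac_part x).
    { rewrite (Rplus_Int_part_frac_part x) at 1.
      replace (- (IZR (Int_part x) + frac_part x))
        with (IZR (- Int_part x - 1) + (1 - frac_part x))
        by (rewrite minus_IZR, opp_IZR; ring).
      apply frac_part_IZR_plus. lra. }
    rewrite Hopp. destruct (Req_dec_T (1 - frac_part x) 0); [lra | easy].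
Qed.

Lemma sum_n_m_rev {G : AbelianMonoid} (a : nat -> G) (n : nat) :
  sum_n_m a 0 n = sum_n_m (fun k => a (n - k)%nat) 0 n.
Proof.
  induction n as [|n IH].
  - now rewrite !sum_n_n.
  - rewrite sum_n_Sm, IH, (sum_Sn_m _ 0 (S n)), <- sum_n_m_S by lia.
    apply plus_comm.
Qed.

Lemma sum_n_m_shift {G : AbelianMonoid} (a : nat -> G) (n m k : nat) :
  sum_n_m (fun i => a (i + k)%nat) n m = sum_n_m a (n + k) (m + k).
Proof.
  induction k as [|k IH] in a |- *.
  - rewrite !Nat.add_0_r. apply sum_n_m_ext. intros i. now rewrite Nat.add_0_r.
  - rewrite !Nat.add_succ_r, <- sum_n_m_S, <- (IH (fun i => a (S i))).
    apply sum_n_m_ext. intros i. now rewrite Nat.add_succ_r.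
Qed.

Lemma sum_n_m_periodic (g : nat -> R) (q b : nat) :
  (forall n, g (n + q)%nat = g n) ->
  sum_n_m g 1 (b * q) = INR b * sum_n_m g 1 q.
Proof.
  intros Hper. induction b as [|b IH].
  - rewrite sum_n_m_zero by lia. now rewrite Rmult_0_l.
  - destruct (Nat.eq_dec q 0) as [-> | Hq].
    { rewrite Nat.mul_0_r, sum_n_m_zero by lia. now rewrite Rmult_0_r. }
    rewrite (sum_n_m_Chasles _ 1 q) by lia.
    replace (S q) with (1 + q)%nat by lia.
    replace (S b * q)%nat with (b * q + q)%nat by lia.
    rewrite <- sum_n_m_shift, (sum_n_m_ext (fun i => g (i + q)%nat) g) by exact Hper.
    rewrite IH, S_INR. unfold plus; simpl. ring.
Qed.

Lemma sum_n_m_minus (u v : nat -> R) (n m : nat) :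
  sum_n_m (fun k => u k - v k) n m = sum_n_m u n m - sum_n_m v n m.
Proof.
  rewrite (sum_n_m_ext _ (fun k => plus (u k) (mult (-1) (v k)))).
  - rewrite sum_n_m_plus, (sum_n_m_mult_l (K := R_Ring)). unfold plus, mult; cbn. ring.
  - intros k. unfold plus, mult; simpl. ring.
Qed.

Lemma sum_n_m_INR (N : nat) : sum_n_m INR 1 N = INR N * (INR N + 1) / 2.
Proof.
  induction N as [|N IH].
  - rewrite sum_n_m_zero by lia. simpl. unfold zero; simpl. field.
  - rewrite sum_n_Sm, IH, S_INR by lia. unfold plus; simpl. field.
Qed.

Lemma sum_n_m_mod_indicator (q : nat) (c : R) : (1 <= q)%nat ->
  sum_n_m (fun n => if (n mod q =? 0)%nat then c else 0) 1 q = c.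
Proof.
  intros Hq. destruct q as [|q]; [lia|].
  rewrite sum_n_Sm by lia. cbv beta. rewrite Nat.Div0.mod_same, Nat.eqb_refl.
  rewrite (sum_n_m_ext_loc _ (fun _ => zero)), sum_n_m_const_zero.
  - apply plus_zero_l.
  - intros n Hn. rewrite Nat.mod_small by lia.
    destruct (Nat.eqb_spec n 0); [lia | reflexivity].
Qed.

Lemma sum_frac_mid_rational (p : Z) (q : nat) : (1 <= q)%nat ->
  sum_n_m (fun n => frac_mid (INR n * (IZR p / INR q))) 1 q = INR q / 2.
Proof.
  intros Hq. set (g n := frac_mid (INR n * (IZR p / INR q))).
  assert (HqR : INR q <> 0) by (apply not_0_INR; lia).
  assert (Hsym : forall n, (n <= q)%nat -> g n + g (q - n)%nat = 1).
  { intros n Hn. unfold g. rewrite minus_INR by exact Hn.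
    replace ((INR q - INR n) * (IZR p / INR q)) with (- (INR n * (IZR p / INR q)) + IZR p)
      by (field; exact HqR).
    rewrite frac_mid_plus_IZR, frac_mid_opp. ring. }
  destruct q as [|q]; [lia|].
  assert (Hshift : sum_n_m g 1 (S q) = sum_n_m g 0 q).
  { rewrite sum_n_Sm, (sum_Sn_m g 0 q) by lia. rewrite plus_comm. f_equal.
    unfold g. change (INR 0) with 0. rewrite Rmult_0_l.
    replace (INR (S q) * (IZR p / INR (S q))) with (0 + IZR p) by (field; exact HqR).
    apply frac_mid_plus_IZR. }
  assert (Hrev : sum_n_m g 1 (S q) = sum_n_m (fun k => g (S q - k)%nat) 0 q).
  { rewrite <- sum_n_m_S, sum_n_m_rev. apply sum_n_m_ext_loc.
    intros k Hk. f_equal. lia. }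
  assert (Hpair : sum_n_m (fun k => g k + g (S q - k)%nat) 0 q = INR (S q)).
  { rewrite (sum_n_m_ext_loc _ (fun _ => 1)), sum_n_m_const.
    - now rewrite Nat.sub_0_r, Rmult_1_r.
    - intros k Hk. apply Hsym. lia. }
  change (fun k => g k + g (S q - k)%nat) with (fun k => plus (g k) (g (S q - k)%nat)) in Hpair.
  rewrite sum_n_m_plus, <- Hshift, <- Hrev in Hpair.
  set (Q := INR (S q)) in *. unfold plus in Hpair; simpl in Hpair.
  lra.
Qed.

Lemma birk_sum_sum_n_m (f : R -> R) (alpha : R) (N : nat) :
  birk_sum f alpha N = sum_n_m (fun n => f (INR n * alpha)) 1 N.
Proof.
  induction N as [|N IH].
  - now rewrite sum_n_m_zero by lia.
  - simpl birk_sum. now rewrite sum_n_Sm, IH by lia.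
Qed.

Section NearRational.

Variables (alpha : R) (p : Z) (q : nat) (sgn : R).
Hypothesis Hq : (1 <= q)%nat.
Hypothesis Hcoprime : Z.gcd (Z.of_nat q) p = 1%Z.
Hypothesis Hsgn : sgn = 1 \/ sgn = -1.
Let delta := INR q * alpha - IZR p.
Hypothesis Hdelta : 0 < sgn * delta.

Let HqR : INR q <> 0.
Proof. apply not_0_INR. lia. Qed.

Lemma saw_near_rational_multiple (m : nat) : (1 <= m)%nat -> INR m * Rabs delta < 1 ->
  saw (INR (m * q) * alpha) = INR m * delta - sgn / 2.
Proof.
  intros Hm Hsmall.
  assert (Hm0 : 0 < INR m) by (apply lt_0_INR; lia).
  unfold saw, fracR.
  replace (INR (m * q) * alpha) with (IZR (Z.of_nat m * p) + INR m * delta)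
    by (unfold delta; rewrite mult_INR, mult_IZR, <- INR_IZR_INZ; ring).
  rewrite (frac_part_IZR_plus_small _ _ sgn Hsgn).
  - field.
  - replace (sgn * (INR m * delta)) with (INR m * (sgn * delta)) by ring.
    now apply Rmult_lt_0_compat.
  - rewrite Rabs_mult, Rabs_pos_eq by lra. exact Hsmall.
Qed.

Lemma not_Zdivide_mul_p (n : nat) : (n mod q <> 0)%nat ->
  ~ (Z.of_nat q | Z.of_nat n * p)%Z.
Proof.
  intros Hn Hdiv. apply Hn, Nat2Z.inj. rewrite Nat2Z.inj_mod.
  apply Znumtheory.Zdivide_mod, (Z.gauss _ p); [now rewrite Z.mul_comm | exact Hcoprime].
Qed.

Lemma saw_near_rational_nonmultiple (n : nat) : (n mod q <> 0)%nat ->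
  INR n * Rabs delta < 1 ->
  saw (INR n * alpha) = frac_mid (INR n * (IZR p / INR q)) - / 2 + INR n * delta / INR q.
Proof.
  intros Hn Hsmall.
  assert (HqR0 : 0 < INR q) by (apply lt_0_INR; lia).
  set (d := (Z.of_nat n * p / Z.of_nat q)%Z).
  set (s := (Z.of_nat n * p mod Z.of_nat q)%Z).
  assert (Hs : (1 <= s <= Z.of_nat q - 1)%Z).
  { pose proof (Z.mod_pos_bound (Z.of_nat n * p) (Z.of_nat q) ltac:(lia)).
    assert (s <> 0%Z); [|lia].
    intros Hs0. apply (not_Zdivide_mul_p n Hn), Z.mod_divide; [lia | exact Hs0]. }
  assert (HsR : 1 <= IZR s <= INR q - 1)
    by (rewrite INR_IZR_INZ, <- minus_IZR; split; apply IZR_le; lia).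
  assert (Hrat : INR n * (IZR p / INR q) = IZR d + IZR s / INR q).
  { assert (Hdm : (Z.of_nat n * p = Z.of_nat q * d + s)%Z) by (apply Z.div_mod; lia).
    apply (f_equal IZR) in Hdm. rewrite plus_IZR, !mult_IZR, <- !INR_IZR_INZ in Hdm.
    unfold Rdiv. rewrite <- Rmult_assoc, Hdm. field. exact HqR. }
  assert (Hfrac : frac_part (INR n * (IZR p / INR q)) = IZR s / INR q).
  { rewrite Hrat. apply frac_part_IZR_plus.
    split; [apply Rdiv_le_0_compat | apply (Rdiv_lt_1 _ _ HqR0)]; lra. }
  assert (Hnd : Rabs (INR n * delta) < 1)
    by (rewrite Rabs_mult, (Rabs_pos_eq (INR n)) by apply pos_INR; exact Hsmall).
  apply Rabs_def2 in Hnd.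
  assert (Halpha : INR n * alpha = IZR d + (IZR s + INR n * delta) / INR q).
  { replace (INR n * alpha) with (INR n * (IZR p / INR q) + INR n * delta / INR q)
      by (unfold delta; field; exact HqR).
    rewrite Hrat. field. exact HqR. }
  unfold saw, fracR, frac_mid. rewrite Hfrac, Halpha, frac_part_IZR_plus.
  - destruct (Req_dec_T (IZR s / INR q) 0) as [Hz | _].
    + assert (0 < IZR s / INR q) by (apply Rdiv_lt_0_compat; lra). lra.
    + field. exact HqR.
  - split; [apply Rdiv_le_0_compat | apply (Rdiv_lt_1 _ _ HqR0)]; lra.
Qed.

Let saw_periodic_part (n : nat) : R :=
  frac_mid (INR n * (IZR p / INR q)) - / 2 - (if (n mod q =? 0)%nat then sgn / 2 else 0).

Lemma saw_near_rational (n : nat) : (1 <= n)%nat -> INR n * Rabs delta < 1 ->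
  saw (INR n * alpha) = saw_periodic_part n + INR n * delta / INR q.
Proof.
  intros Hn Hsmall. unfold saw_periodic_part.
  destruct (Nat.eqb_spec (n mod q) 0) as [Hmod | Hmod].
  - apply Nat.Lcm0.mod_divide in Hmod as [m ->].
    assert (HmqR : INR m <= INR (m * q)) by (apply le_INR; nia).
    rewrite saw_near_rational_multiple; [| nia | pose proof (Rabs_pos delta); nra].
    replace (INR (m * q) * (IZR p / INR q)) with (0 + IZR (Z.of_nat m * p))
      by (rewrite mult_INR, mult_IZR, <- INR_IZR_INZ; field; exact HqR).
    rewrite frac_mid_plus_IZR. unfold frac_mid. rewrite fp_R0.
    destruct (Req_dec_T 0 0) as [_ | []]; [| reflexivity].
    rewrite mult_INR. field. exact HqR.
  - rewrite saw_near_rational_nonmultiple by assumption. ring.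
Qed.

Lemma saw_periodic_part_periodic (n : nat) : saw_periodic_part (n + q) = saw_periodic_part n.
Proof.
  unfold saw_periodic_part.
  replace (INR (n + q) * (IZR p / INR q)) with (INR n * (IZR p / INR q) + IZR p)
    by (rewrite plus_INR; field; exact HqR).
  replace (n + q)%nat with (n + 1 * q)%nat by lia.
  now rewrite frac_mid_plus_IZR, Nat.Div0.mod_add.
Qed.

Lemma sum_saw_periodic_part : sum_n_m saw_periodic_part 1 q = - sgn / 2.
Proof.
  unfold saw_periodic_part.
  rewrite !sum_n_m_minus, sum_frac_mid_rational, sum_n_m_const, sum_n_m_mod_indicator by lia.
  replace (S q - 1)%nat with q by lia. cbn. field.
Qed.

Theorem birk_sum_saw_near_rational (b : nat) : INR b * INR q * Rabs delta < 1 ->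
  birk_sum saw alpha (b * q) = delta * INR b * (INR b * INR q + 1) / 2 - sgn * INR b / 2.
Proof.
  intros Hsmall. rewrite birk_sum_sum_n_m.
  rewrite (sum_n_m_ext_loc _
             (fun n => plus (saw_periodic_part n) (mult (INR n) (delta / INR q)))).
  - rewrite sum_n_m_plus, (sum_n_m_mult_r (K := R_Ring)), sum_n_m_periodic,
      sum_saw_periodic_part, sum_n_m_INR by exact saw_periodic_part_periodic.
    unfold plus, mult; simpl. rewrite mult_INR. field. exact HqR.
  - intros n Hn. rewrite saw_near_rational.
    + unfold plus, mult; simpl. field. exact HqR.
    + lia.
    + assert (INR n <= INR b * INR q) by (rewrite <- mult_INR; apply le_INR; lia).
      pose proof (Rabs_pos delta). nra.
Qed.

End NearRational.

Lemma RInt_saw : RInt saw 0 1 = 0.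
Proof.
  apply is_RInt_unique.
  apply (is_RInt_ext (fun x => x - / 2)).
  { intros x Hx. rewrite Rmin_left, Rmax_right in Hx by lra.
    unfold saw, fracR. rewrite <- (Rplus_0_l x) at 2.
    rewrite frac_part_IZR_plus; lra. }
  set (F x := x * x / 2 - x / 2).
  assert (HF : is_RInt (fun x => x - / 2) 0 1 (minus (F 1) (F 0))).
  { apply (is_RInt_derive F).
    - intros x _. unfold F. auto_derive; [exact I | field].
    - intros x _. apply continuity_pt_filterlim. reg. }
  replace (minus (F 1) (F 0)) with 0 in HF by (unfold F, minus, plus, opp; simpl; field).
  exact HF.
Qed.

Lemma irrational_neq_0 (x : R) : irrational x -> x <> 0.
Proof. intros Hx ->. apply Hx. exists 0%Z, 1%Z. split; [lia | simpl; field]. Qed.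

Lemma irrational_inv (x : R) : irrational x -> irrational (/ x).
Proof.
  intros Hx [p [q [Hq E]]]. apply Hx.
  assert (Hx0 := irrational_neq_0 x Hx).
  assert (Hp : p <> 0%Z).
  { intros ->. apply (Rinv_neq_0_compat x Hx0). rewrite E. unfold Rdiv. ring. }
  exists q, p. split; [exact Hp|].
  rewrite <- (Rinv_inv x), E. field. split; apply not_0_IZR; assumption.
Qed.

Lemma irrational_minus_IZR (x : R) (z : Z) : irrational x -> irrational (x - IZR z).
Proof.
  intros Hx [p [q [Hq E]]]. apply Hx. exists (p + z * q)%Z, q. split; [exact Hq|].
  replace x with ((x - IZR z) + IZR z) by ring.
  rewrite E, plus_IZR, mult_IZR. field. apply not_0_IZR. exact Hq.
Qed.

(* cf_ppair alpha k = (p_{k-1}, p_k) with p_{-1} = 1 and p_0 = 0, as for [cf_qpair]. *)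
Fixpoint cf_ppair (alpha : R) (k : nat) : Z * Z :=
  match k with
  | O => (1%Z, 0%Z)
  | S k' => let (pm, p) := cf_ppair alpha k' in (p, (Z.of_nat (cf_a alpha k) * p + pm)%Z)
  end.

Definition cf_p (alpha : R) (k : nat) : Z := snd (cf_ppair alpha k).

(* q_k / x_k + q_{k-1} = q_{k+1} + x_{k+1} q_k, where x_k = cf_rem alpha k. *)
Definition cf_err_denom (alpha : R) (k : nat) : R :=
  INR (cf_q alpha k) / cf_rem alpha k + INR (fst (cf_qpair alpha k)).

Lemma cf_qpair_S (alpha : R) (k : nat) : cf_qpair alpha (S k) =
  (cf_q alpha k, (cf_a alpha (S k) * cf_q alpha k + fst (cf_qpair alpha k))%nat).
Proof. unfold cf_q. simpl. now destruct (cf_qpair alpha k). Qed.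

Lemma cf_ppair_S (alpha : R) (k : nat) : cf_ppair alpha (S k) =
  (cf_p alpha k, (Z.of_nat (cf_a alpha (S k)) * cf_p alpha k + fst (cf_ppair alpha k))%Z).
Proof. unfold cf_p. simpl. now destruct (cf_ppair alpha k). Qed.

Lemma cf_det (alpha : R) (k : nat) :
  IZR (Z.of_nat (cf_q alpha k) * fst (cf_ppair alpha k)
       - cf_p alpha k * Z.of_nat (fst (cf_qpair alpha k))) = (-1) ^ k.
Proof.
  induction k as [|k IH]; [reflexivity|].
  unfold cf_q, cf_p. rewrite cf_qpair_S, cf_ppair_S. cbn [fst snd].
  set (q := cf_q alpha k) in *. set (p := cf_p alpha k) in *.
  set (qm := fst (cf_qpair alpha k)) in *. set (pm := fst (cf_ppair alpha k)) in *.
  set (a := cf_a alpha (S k)).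
  replace (Z.of_nat (a * q + qm) * p - (Z.of_nat a * p + pm) * Z.of_nat q)%Z
    with (- (Z.of_nat q * pm - p * Z.of_nat qm))%Z
    by (rewrite Nat2Z.inj_add, Nat2Z.inj_mul; ring).
  rewrite opp_IZR, IH. simpl. ring.
Qed.

Lemma cf_coprime (alpha : R) (k : nat) : Z.gcd (Z.of_nat (cf_q alpha k)) (cf_p alpha k) = 1%Z.
Proof.
  pose proof (cf_det alpha k) as Hdet. pose proof (pow_1_abs k) as Habs.
  set (d := (Z.of_nat (cf_q alpha k) * fst (cf_ppair alpha k)
             - cf_p alpha k * Z.of_nat (fst (cf_qpair alpha k)))%Z) in Hdet.
  rewrite <- Hdet, Rabs_Zabs in Habs. apply eq_IZR in Habs.
  apply Z.bezout_1_gcd.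
  exists (d * fst (cf_ppair alpha k))%Z, (- (d * Z.of_nat (fst (cf_qpair alpha k))))%Z.
  unfold d. nia.
Qed.

Lemma pow_neg1_cases (k : nat) : (-1) ^ k = 1 \/ (-1) ^ k = -1.
Proof. induction k as [|k [IH | IH]]; simpl; rewrite ?IH; [left | right | left]; ring. Qed.

Section ContinuedFraction.

Variable alpha : R.
Hypothesis Halpha : 0 <= alpha < 1.
Hypothesis Hirr : irrational alpha.

Lemma cf_rem_bounds (k : nat) : 0 < cf_rem alpha k < 1 /\ irrational (cf_rem alpha k).
Proof.
  induction k as [|k [Hb Hk]]; simpl.
  - pose proof (irrational_neq_0 alpha Hirr). split; [lra | exact Hirr].
  - unfold fracR, frac_part.
    pose proof (irrational_minus_IZR _ (Int_part (/ cf_rem alpha k)) (irrational_inv _ Hk)) as Hi.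
    pose proof (irrational_neq_0 _ Hi). pose proof (base_fp (/ cf_rem alpha k)) as Hfp.
    unfold frac_part in Hfp. split; [lra | exact Hi].
Qed.

Lemma cf_rem_inv (k : nat) :
  / cf_rem alpha k = INR (cf_a alpha (S k)) + cf_rem alpha (S k).
Proof.
  destruct (cf_rem_bounds k) as [[Hx0 Hx1] _].
  assert (Hinv : 1 < / cf_rem alpha k) by (rewrite <- Rinv_1; apply Rinv_lt_contravar; lra).
  pose proof (base_Int_part (/ cf_rem alpha k)) as [_ Hint].
  assert (Hz : (0 <= Int_part (/ cf_rem alpha k))%Z) by (apply le_IZR; lra).
  simpl. rewrite INR_IZR_INZ, Z2Nat.id by exact Hz.
  unfold fracR, frac_part. ring.
Qed.

Lemma cf_a_pos (k : nat) : (1 <= cf_a alpha (S k))%nat.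
Proof.
  destruct (cf_rem_bounds k) as [[Hx0 Hx1] _].
  destruct (cf_rem_bounds (S k)) as [[Hy0 Hy1] _].
  assert (Hinv : 1 < / cf_rem alpha k) by (rewrite <- Rinv_1; apply Rinv_lt_contravar; lra).
  rewrite cf_rem_inv in Hinv.
  apply INR_lt. change (0 < INR (cf_a alpha (S k))). lra.
Qed.

Lemma cf_q_bounds (k : nat) :
  (1 <= cf_q alpha k /\ fst (cf_qpair alpha k) <= cf_q alpha k)%nat.
Proof.
  induction k as [|k IH]; [unfold cf_q; simpl; lia|].
  pose proof (cf_a_pos k). unfold cf_q at 1 2. rewrite cf_qpair_S. cbn [fst snd]. nia.
Qed.

Lemma cf_convergent (k : nat) :
  alpha * (INR (cf_q alpha k) + cf_rem alpha k * INR (fst (cf_qpair alpha k)))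
  = IZR (cf_p alpha k) + cf_rem alpha k * IZR (fst (cf_ppair alpha k)).
Proof.
  induction k as [|k IH]; [unfold cf_q, cf_p; simpl; ring|].
  destruct (cf_rem_bounds k) as [[Hx0 _] _].
  assert (Ht : cf_rem alpha k * (INR (cf_a alpha (S k)) + cf_rem alpha (S k)) = 1)
    by (rewrite <- cf_rem_inv; field; lra).
  unfold cf_q, cf_p. rewrite cf_qpair_S, cf_ppair_S. cbn [fst snd].
  rewrite plus_INR, mult_INR, plus_IZR, mult_IZR, <- INR_IZR_INZ.
  set (a := INR (cf_a alpha (S k))) in *. set (x := cf_rem alpha k) in *.
  set (x' := cf_rem alpha (S k)) in *.
  set (q := INR (cf_q alpha k)) in *. set (qm := INR (fst (cf_qpair alpha k))) in *.
  set (p := IZR (cf_p alpha k)) in *. set (pm := IZR (fst (cf_ppair alpha k))) in *.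
  assert (E : alpha * (a * q + qm + x' * q) - (a * p + pm + x' * p)
    = (a + x') * (alpha * (q + x * qm) - (p + x * pm)) + (alpha * qm - pm) * (1 - x * (a + x')))
    by ring.
  rewrite IH, Ht in E. lra.
Qed.

Lemma cf_error (k : nat) :
  (INR (cf_q alpha k) * alpha - IZR (cf_p alpha k)) * cf_err_denom alpha k = (-1) ^ k.
Proof.
  destruct (cf_rem_bounds k) as [[Hx0 _] _].
  pose proof (cf_convergent k) as Hconv.
  unfold cf_err_denom. rewrite <- (cf_det alpha k), minus_IZR, !mult_IZR, <- !INR_IZR_INZ.
  set (x := cf_rem alpha k) in *.
  set (q := INR (cf_q alpha k)) in *. set (qm := INR (fst (cf_qpair alpha k))) in *.
  set (p := IZR (cf_p alpha k)) in *. set (pm := IZR (fst (cf_ppair alpha k))) in *.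
  replace (q / x + qm) with ((q + x * qm) / x) by (field; lra).
  replace ((q * alpha - p) * ((q + x * qm) / x))
    with ((q * (alpha * (q + x * qm)) - p * (q + x * qm)) / x) by (field; lra).
  rewrite Hconv. field. lra.
Qed.

Lemma cf_err_denom_bounds (k : nat) :
  INR (cf_a alpha (S k)) * INR (cf_q alpha k) < cf_err_denom alpha k
  <= (INR (cf_a alpha (S k)) + 2) * INR (cf_q alpha k).
Proof.
  destruct (cf_q_bounds k) as [Hq Hqm].
  destruct (cf_rem_bounds (S k)) as [[Hx0 Hx1] _].
  apply le_INR in Hq, Hqm. pose proof (pos_INR (fst (cf_qpair alpha k))).
  unfold cf_err_denom, Rdiv. rewrite Rmult_comm, cf_rem_inv. simpl INR in Hq. split; nra.
Qed.

Theorem birk_sum_saw_convergent (k b : nat) : (b <= cf_a alpha (S k))%nat ->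
  birk_sum saw alpha (b * cf_q alpha k)
  = (-1) ^ k * (INR b * (INR b * INR (cf_q alpha k) + 1) / (2 * cf_err_denom alpha k)
                - INR b / 2).
Proof.
  intros Hb.
  pose proof (cf_error k) as Herr. pose proof (cf_err_denom_bounds k) as HM.
  destruct (cf_q_bounds k) as [Hq _].
  assert (HqR : 1 <= INR (cf_q alpha k)) by (apply (le_INR 1); exact Hq).
  assert (HbR : INR b <= INR (cf_a alpha (S k))) by (apply le_INR; exact Hb).
  pose proof (pos_INR b).
  set (M := cf_err_denom alpha k) in *.
  set (delta := INR (cf_q alpha k) * alpha - IZR (cf_p alpha k)) in Herr.
  assert (HM0 : 0 < M) by nra.
  assert (Hdelta : delta = (-1) ^ k / M) by (rewrite <- Herr; field; lra).
  rewrite (birk_sum_saw_near_rational alpha (cf_p alpha k) (cf_q alpha k) ((-1) ^ k));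
    fold delta.
  - rewrite Hdelta. field. lra.
  - exact Hq.
  - apply cf_coprime.
  - apply pow_neg1_cases.
  - rewrite Hdelta. unfold Rdiv. rewrite <- Rmult_assoc.
    replace ((-1) ^ k * (-1) ^ k) with 1 by (destruct (pow_neg1_cases k) as [-> | ->]; ring).
    rewrite Rmult_1_l. apply Rinv_0_lt_compat. exact HM0.
  - rewrite Hdelta, Rabs_div, pow_1_abs, (Rabs_pos_eq M) by lra.
    replace (INR b * INR (cf_q alpha k) * (1 / M)) with (INR b * INR (cf_q alpha k) / M)
      by (field; lra).
    apply (Rdiv_lt_1 _ _ HM0). nra.
Qed.

End ContinuedFraction.

Lemma main_term_deviation_bound (a b Q M : R) :
  1 <= a -> 0 <= b <= a -> 1 <= Q -> a * Q <= M <= (a + 2) * Q ->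
  Rabs (b * (b * Q + 1) / (2 * M) - b * b / (2 * a)) <= 1.
Proof.
  intros Ha Hb HQ HM.
  assert (HM0 : 0 < M) by nra.
  assert (HD : 0 < 2 * a * M) by nra.
  replace (b * (b * Q + 1) / (2 * M) - b * b / (2 * a))
    with ((a * b * (b * Q + 1) - b * b * M) / (2 * a * M)) by (field; lra).
  rewrite Rabs_div, (Rabs_pos_eq (2 * a * M)) by lra.
  apply (Rdiv_le_1 _ _ HD), Rabs_le. split.
  - assert (b * b * M <= b * b * ((a + 2) * Q)) by (apply Rmult_le_compat_l; nra).
    assert (b * b * Q <= a * a * Q) by (apply Rmult_le_compat_r; nra).
    nra.
  - assert (b * b * (a * Q) <= b * b * M) by (apply Rmult_le_compat_l; nra).
    nra.
Qed.

Theorem lemma3p6 :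
  exists A0 C : R, 0 < A0 /\ 0 < C /\
    forall alpha : R, 0 <= alpha < 1 -> irrational alpha ->
    forall K : nat, (1 <= K)%nat -> A0 <= INR (cf_a alpha K) ->
    forall b : nat, (b <= cf_a alpha K)%nat ->
      Rabs (S_N (b * cf_q alpha (K - 1)) saw alpha
            - (-1) ^ K * (INR b / 2) * (1 - INR b / INR (cf_a alpha K))) <= C.
Proof.
  exists 1, 1. split; [lra | split; [lra |]].
  intros alpha Halpha Hirr K HK _ b Hb.
  destruct K as [|k]; [lia |]. rewrite Nat.sub_succ, Nat.sub_0_r.
  unfold S_N. rewrite RInt_saw, Rmult_0_r, Rminus_0_r, birk_sum_saw_convergent by assumption.
  pose proof (cf_err_denom_bounds alpha Halpha Hirr k) as HM.
  pose proof (cf_a_pos alpha Halpha Hirr k) as Ha. apply (le_INR 1) in Ha.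
  destruct (cf_q_bounds alpha Halpha Hirr k) as [Hq _]. apply (le_INR 1) in Hq.
  assert (HbR : 0 <= INR b <= INR (cf_a alpha (S k)))
    by (split; [apply pos_INR | apply le_INR; exact Hb]).
  set (a := INR (cf_a alpha (S k))) in *. set (q := INR (cf_q alpha k)) in *.
  set (M := cf_err_denom alpha k) in *. simpl INR in Ha, Hq.
  replace ((-1) ^ k * (INR b * (INR b * q + 1) / (2 * M) - INR b / 2)
           - (-1) ^ S k * (INR b / 2) * (1 - INR b / a))
    with ((-1) ^ k * (INR b * (INR b * q + 1) / (2 * M) - INR b * INR b / (2 * a)))
    by (simpl; field; split; nra).
  rewrite Rabs_mult, pow_1_abs, Rmult_1_l.
  apply main_term_deviation_bound; lra.
Qed.
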